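(* Let $D\ge1$, let $Q_D$ be the $D$-dimensional hypercube on $X=\{0,1\}^D$ with adjacency matrix $A$. Fix $x\in X$ and let $B$ be a symmetric $A$-like matrix such that $B_{xy}=0$ for all $y\in X$. Then $B=0$.
   Context: $Q_D$ is the graph with vertex set $X=\{0,1\}^D$, two vertices adjacent iff they differ in exactly one coordinate. Matrices are real with rows and columns indexed by $X$. A matrix $B$ is $A$-like if $BA=AB$ and $B_{xy}=0$ for all $x,y\in X$ that are neither equal nor adjacent. *)

From mathcomp Require Import all_boot all_order all_algebra.
From mathcomp Require Import reals.
Set Implicit Arguments. Unset Strict Implicit. Unset Printing Implicit Defensive.
Import Order.TTheory GRing.Theory Num.Theory.
Local Open Scope ring_scope.

Definition cube (D : nat) := {ffun 'I_D -> bool}.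

Definition hdist (D : nat) (x y : cube D) : nat := #|[set i | x i != y i]|.

Definition adj (D : nat) (x y : cube D) : bool := hdist x y == 1%N.

Definition cmx (R : realType) (D : nat) := 'M[R]_#|cube D|.

Definition ent (R : realType) (D : nat) (B : cmx R D) (x y : cube D) : R :=
  B (enum_rank x) (enum_rank y).

Definition adjmx (R : realType) (D : nat) : cmx R D :=
  \matrix_(i, j) (adj (enum_val i) (enum_val j))%:R.

Definition A_like (R : realType) (D : nat) (B : cmx R D) : Prop :=
  B *m adjmx R D = adjmx R D *m B /\
  forall x y : cube D, x != y -> ~~ adj x y -> ent B x y = 0.

From mathcomp Require Import all_boot all_order all_algebra.
From mathcomp Require Import reals.
Set Implicit Arguments. Unset Strict Implicit. Unset Printing Implicit Defensive.
Import Order.TTheory GRing.Theory Num.Theory.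
Local Open Scope ring_scope.

(* Reading [B A = A B] at an edge (u, v), bipartiteness of Q_D leaves a
   single term on each side, so B_uu = B_vv: the diagonal is constant,
   hence zero since B_xx = 0. At a pair (u, v) of distance 2 with common
   neighbours p, q it gives B_up + B_uq = B_pv + B_qv. If the edge entries
   at u vanish, this identity at u and at p, together with symmetry,
   yields 2 B_qv = 0 for the edge (q, v) leaving the neighbour q of u, so
   by connectivity all edge entries vanish. *)

Section BigSupport.

Variables (T : finType) (V : nmodType) (F : T -> V).

Lemma big_supp1 p : (forall z, z != p -> F z = 0) -> \sum_z F z = F p.
Proof. by move=> F0; rewrite (bigD1 p) //= big1 ?addr0. Qed.

Lemma big_supp2 p q : p != q ->
  (forall z, z != p -> z != q -> F z = 0) -> \sum_z F z = F p + F q.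
Proof.
move=> npq F0; rewrite (bigD1 p) //= (bigD1 q) 1?eq_sym //=.
by rewrite big1 ?addr0 // => z /andP[zp zq]; apply: F0.
Qed.

End BigSupport.

Section Hypercube.

Variable D : nat.
Implicit Types (u v y z : cube D) (i j : 'I_D).

Definition flip y i : cube D := [ffun k => if k == i then ~~ y k else y k].

Lemma flipE y i k : flip y i k = if k == i then ~~ y k else y k.
Proof. by rewrite ffunE. Qed.

Lemma flipK i : involutive (flip^~ i).
Proof. by move=> y; apply/ffunP => k; rewrite !flipE; case: (k == i); rewrite ?negbK. Qed.

Lemma flipC y i j : flip (flip y i) j = flip (flip y j) i.
Proof. by apply/ffunP => k; rewrite !flipE; case: (k == i); case: (k == j). Qed.

Lemma flip_inj y : {in predT &, injective (flip y)}.
Proof.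
move=> i j _ _ /ffunP /(_ i); rewrite !flipE eqxx.
by case: eqP => // _; case: (y i).
Qed.

Lemma adj_flip y i : adj y (flip y i).
Proof.
rewrite /adj /hdist (_ : [set k | _] = [set i]) ?cards1 //.
by apply/setP => k; rewrite !inE flipE; case: (k == i); case: (y k).
Qed.

Lemma adjP u v : adj u v -> exists i, v = flip u i.
Proof.
move=> /cards1P[i /setP Ei]; exists i; apply/ffunP => k.
by move: (Ei k); rewrite !inE flipE; case: (k == i); case: (u k); case: (v k).
Qed.

Lemma adj_sym u v : adj u v = adj v u.
Proof.
rewrite /adj /hdist (_ : [set k | v k != u k] = [set k | u k != v k]) //.
by apply/setP => k; rewrite !inE eq_sym.
Qed.

Definition parity y := odd #|[set k | y k]|.

Lemma parity_flip y i : parity (flip y i) = ~~ parity y.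
Proof.
rewrite /parity (cardsD1 i [set k | y k]) (cardsD1 i [set k | flip y i k]).
have -> : [set k | flip y i k] :\ i = [set k | y k] :\ i.
  by apply/setP => k; rewrite !inE flipE; case: (k == i).
by rewrite !inE flipE eqxx; case: (y i); rewrite /= ?negbK.
Qed.

Lemma parity_adj u v : adj u v -> parity v = ~~ parity u.
Proof. by move=> /adjP[i ->]; rewrite parity_flip. Qed.

Lemma parity_nadj u v : parity u = parity v -> ~~ adj u v.
Proof. by move=> Euv; apply/negP => /parity_adj; rewrite Euv; case: (parity v). Qed.

Lemma common_neighbours u z i j : i != j ->
  adj u z -> adj z (flip (flip u i) j) -> z = flip u i \/ z = flip u j.
Proof.
move=> nij /adjP[k ->] /adjP[l E].
have [->|nki] := eqVneq k i; first by left.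
have [->|nkj] := eqVneq k j; first by right.
have [ekl|nkl] := eqVneq k l.
  move: E => /ffunP/(_ i); rewrite -ekl flipK !flipE eqxx (negbTE nij).
  by case: (u i).
move: E => /ffunP/(_ k); rewrite !flipE eqxx (negbTE nki) (negbTE nkj).
by rewrite (negbTE nkl); case: (u k).
Qed.

Lemma cube_flip_ind x (P : cube D -> Prop) :
  P x -> (forall y i, P y -> P (flip y i)) -> forall y, P y.
Proof.
move=> Px Pflip y; move Ed: (hdist x y) => n.
elim: n y Ed => [|n IHn] y Ed.
  suff -> : y = x by [].
  apply/ffunP => k; apply/eqP/negPn; apply: contra_eqN Ed => dk.
  by rewrite -lt0n card_gt0; apply/set0Pn; exists k; rewrite inE eq_sym.
have /set0Pn[i] : [set k | x k != y k] != set0 by rewrite -card_gt0 -/(hdist x y) Ed.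
rewrite inE => dxyi; rewrite -(flipK i y); apply/Pflip/IHn.
move: Ed; rewrite /hdist (cardsD1 i) inE dxyi add1n => -[<-].
rewrite (_ : [set k | _] = [set k | x k != y k] :\ i) //.
apply/setP => k; rewrite !inE flipE.
have [->|_] := eqVneq k i; last by [].
by move: dxyi; case: (x i); case: (y i).
Qed.

End Hypercube.

Section ALike.

Variables (R : realType) (D : nat) (B : cmx R D).
Hypothesis B_like : A_like B.
Implicit Types (u v y z : cube D) (i j : 'I_D).

Lemma sum_cube (F : 'I_#|cube D| -> R) :
  \sum_k F k = \sum_(z : cube D) F (enum_rank z).
Proof. by rewrite (reindex _ (onW_bij _ (@enum_rank_bij (cube D)))). Qed.

Lemma A_like_commE u v :
  \sum_z ent B u z * (adj z v)%:R = \sum_z (adj u z)%:R * ent B z v.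
Proof.
have /matrixP/(_ (enum_rank u) (enum_rank v)) := B_like.1.
rewrite !mxE !sum_cube => Euv.
transitivity
  (\sum_z B (enum_rank u) (enum_rank z) * adjmx R D (enum_rank z) (enum_rank v)).
  by apply: eq_bigr => z _; rewrite /ent mxE !enum_rankK.
by rewrite Euv; apply: eq_bigr => z _; rewrite /ent mxE !enum_rankK.
Qed.

Lemma A_like_supp u v : ent B u v != 0 -> (u == v) || adj u v.
Proof. by apply: contraR => /norP[nuv nadj]; apply/eqP; rewrite B_like.2. Qed.

Lemma A_like_diag_flip u i : ent B u u = ent B (flip u i) (flip u i).
Proof.
set v := flip u i; have := A_like_commE u v.
rewrite (@big_supp1 _ _ _ u) => [|z nzu /=]; last first.
  have [->|/A_like_supp/predU1P[/eqP|auz]] := eqVneq (ent B u z) 0.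
  - by rewrite mul0r.
  - by rewrite eq_sym (negbTE nzu).
  by rewrite (negbTE (parity_nadj _)) ?mulr0 // (parity_adj auz) /v parity_flip.
rewrite (@big_supp1 _ _ _ v) => [|z nzv /=]; last first.
  have [->|/A_like_supp/predU1P[/eqP|azv]] := eqVneq (ent B z v) 0.
  - by rewrite mulr0.
  - by rewrite (negbTE nzv).
  rewrite (negbTE (@parity_nadj _ u z _)) ?mul0r //.
  by have := parity_adj azv; rewrite /v parity_flip => /(can_inj negbK).
by rewrite /v adj_flip mulr1 mul1r.
Qed.

Lemma A_like_square_flip u i j : i != j ->
  ent B u (flip u i) + ent B u (flip u j) =
  ent B (flip u i) (flip (flip u i) j) + ent B (flip u j) (flip (flip u i) j).
Proof.
move=> nij; set v := flip (flip u i) j.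
have nuv : ~~ adj u v by apply: parity_nadj; rewrite !parity_flip negbK.
have npq : flip u i != flip u j by apply: contra_neq nij; apply: flip_inj.
have aqv : adj (flip u j) v by rewrite /v flipC adj_flip.
have path2 z : z != flip u i -> z != flip u j -> adj u z -> adj z v -> False.
  move=> zp zq auz azv.
  by case: (common_neighbours nij auz azv) => Ez; [move/eqP: zp|move/eqP: zq].
have := A_like_commE u v.
rewrite (@big_supp2 _ _ _ (flip u i) (flip u j)) // => [|z zp zq /=]; last first.
  have [azv|] := boolP (adj z v); last by rewrite mulr0.
  have [->|/A_like_supp/predU1P[Euz|auz]] := eqVneq (ent B u z) 0.
  - by rewrite mul0r.
  - by move: azv nuv; rewrite -Euz => ->.
  by case: (path2 z zp zq auz azv).
rewrite (@big_supp2 _ _ _ (flip u i) (flip u j)) // => [|z zp zq /=]; last first.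
  have [auz|] := boolP (adj u z); last by rewrite mul0r.
  have [->|/A_like_supp/predU1P[Ezv|azv]] := eqVneq (ent B z v) 0.
  - by rewrite mulr0.
  - by move: auz nuv; rewrite Ezv => ->.
  by case: (path2 z zp zq auz azv).
by rewrite adj_flip aqv !(adj_flip, adj_sym u) !mulr1 !mul1r.
Qed.

Variable x : cube D.
Hypothesis Bx0 : forall y, ent B x y = 0.

Lemma A_like_diag_eq0 y : ent B y y = 0.
Proof.
move: y; apply: (@cube_flip_ind _ x) => [|y i By0]; first exact: Bx0.
by rewrite -A_like_diag_flip.
Qed.

Hypothesis B_sym : B^T = B.

Lemma ent_sym u v : ent B u v = ent B v u.
Proof. by rewrite /ent -{1}B_sym mxE. Qed.

Lemma A_like_edge_eq0 y i : ent B y (flip y i) = 0.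
Proof.
move: y i; apply: (@cube_flip_ind _ x) => [|y j By0] i; first exact: Bx0.
have [->|nji] := eqVneq j i; first by rewrite flipK ent_sym.
have nij : i != j by rewrite eq_sym.
rewrite -flipC; set d := ent B (flip y j) _.
have := A_like_square_flip y nij; rewrite !By0 add0r.
have := A_like_square_flip (flip y i) nij.
rewrite flipK ent_sym !By0 !add0r (ent_sym (flip _ j)) => ->.
by move/eqP; rewrite eq_sym -mulr2n mulrn_eq0 => /eqP.
Qed.

End ALike.

Lemma cmx_eq0 (R : realType) D (B : cmx R D) :
  (forall u v : cube D, ent B u v = 0) -> B = 0.
Proof.
move=> B0; apply/matrixP => a b.
by rewrite mxE -(B0 (enum_val a) (enum_val b)) /ent !enum_valK.
Qed.

Theorem lemma8p3 (R : realType) (D : nat) (hD : (1 <= D)%N) (x : cube D)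
  (B : cmx R D) (hsym : B^T = B) (hlike : A_like B)
  (hx : forall y : cube D, ent B x y = 0) :
  B = 0.
Proof.
apply: cmx_eq0 => u v.
have [<-|nuv] := eqVneq u v; first exact: A_like_diag_eq0 hx u.
have [/adjP[i ->]|nadj] := boolP (adj u v); first exact: A_like_edge_eq0.
exact: hlike.2.
Qed.
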